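(* Let $A=\langle V,\textit{val}_0,\delta\rangle$ be an arena over disjoint finite Boolean sets $\mathbb{E},\mathbb{C}$, let $Pr\subseteq Pred(V)$ and $\mathbb{E}'\supseteq\mathbb{E}$ be finite, and let $M$ be an abstract counterstrategy, i.e. a Moore machine with input $2^{\mathbb{C}}$ and output $2^{\mathbb{E}'\cup Pr}$. Then $M$ is concretisable w.r.t. $A$ if and only if every trace $t\in L(M)$ is concretisable in $A$.
   Context: Theory setting: fix a first-order theory with constants $\mathcal{C}$. For finite $V$, $\mathcal{T}(V)$ are terms over $V$; $V_{prev}=\{v_{prev}\}$ fresh copies. State predicates: predicates over $\mathcal{T}(V)$; transition predicates: over $\mathcal{T}(V\cup V_{prev})$; $Pred(V)$ their union. Valuations $V\to\mathcal{C}$ form $\textit{Val}(V)$. Updates $U:V\to\mathcal{T}(V)$ act by $U(\textit{val})(v)=$ value of $U(v)$ under $\textit{val}$. $\textit{val}\models s$: $\textit{val}$ is a model of state predicate $s$; $(\textit{val},\textit{val}')\models t$: $\textit{val}_{prev}\cup\textit{val}'$ is a model of $t$, with $\textit{val}_{prev}(v_{prev})=\textit{val}(v)$. A valuation not assigning all variables of a formula does not satisfy it. For $S\subseteq T$, $\bigwedge\!\!\bigwedge_T S:=\bigwedge S\wedge\bigwedge_{s\in T\setminus S}\neg s$. Arena $A=\langle V,\textit{val}_0,\delta\rangle$: $\delta$ is a finite-domain partial function from Boolean combinations of $\mathbb{E}\cup\mathbb{C}\cup Pred(V)$ to updates with, for each $\textit{val}$, $E\subseteq\mathbb{E}$, $C\subseteq\mathbb{C}$,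 exactly one $f\in dom(\delta)$ with $(\textit{val},E\cup C)\models f$; $\delta(\textit{val},E\cup C):=\delta(f)(\textit{val})$. $L(A)$: words $w\in(\textit{Val}(V)\times2^{\mathbb{E}\cup\mathbb{C}})^\omega$ with $w(0)=(\textit{val}_0,\cdot)$ and $\textit{val}_{i+1}=\delta(\textit{val}_i,E_i\cup C_i)$, where $w(i)=(\textit{val}_i,E_i\cup C_i)$. An abstract word $a\in(2^{\mathbb{E}'\cup\mathbb{C}\cup Pr})^\omega$ abstracts $w$ if for all $i$, with $a(i)=E_i\cup C_i\cup Pr_i$, $w(i)=(\textit{val}_i,(E_i\cap\mathbb{E})\cup C_i)$, $\textit{val}_0\models\bigwedge\!\!\bigwedge_{Pr}Pr_0$, and $(\textit{val}_{i-1},\textit{val}_i)\models\bigwedge\!\!\bigwedge_{Pr}Pr_i$ for $i>0$; $\gamma(a)$ is the set of such $w$; $a$ is concretisable in $A$ if $L(A)\cap\gamma(a)\neq\emptyset$. Moore machine $M=\langle S,s_0,2^{\mathbb{C}},2^{\mathbb{E}'\cup Pr},\rightarrow,out\rangle$ with total deterministic $\rightarrow:S\times2^{\mathbb{C}}\to S$; a run produces the word $(C_i\cup out(s_i))_i$ where $s_{i+1}$ is the $C_i$-successor of $s_i$; $L(M)$ is the set of these traces. Concretisability of $M$: let $\preceq_A\subseteq\textit{Val}(V)\times S$ be the largest relation such that whenever $\textit{val}\preceq_A s$ with $out(s)=E\cup ST\cup TR$ ($E\subseteq\mathbb{E}'$, $ST$ state predicates, $TR$ transition predicates): (1) $\textit{val}\models\bigwedge\!\!\bigwedge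 ST$ (w.r.t. the state predicates of $Pr$); (2) for every $C\subseteq\mathbb{C}$, with $\textit{val}_C=\delta(\textit{val},(E\cap\mathbb{E})\cup C)$, $s_C$ the $C$-successor of $s$, $TR_C$ the transition predicates in $out(s_C)$: (a) $(\textit{val},\textit{val}_C)\models\bigwedge\!\!\bigwedge TR_C$ (w.r.t. the transition predicates of $Pr$) and (b) $\textit{val}_C\preceq_A s_C$. $M$ is concretisable w.r.t. $A$ if $\textit{val}_0\preceq_A s_0$. *)

From mathcomp Require Import all_boot.
Set Implicit Arguments. Unset Strict Implicit. Unset Printing Implicit Defensive.

(* A first-order theory over the variable set V, given semantically:
   - cst      : the constants (values) of the theory, C in the paper;
   - term     : terms T(V) over V, with their evaluation under a valuation;
   - spred    : state predicates (over T(V)), with satisfaction val |= s;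
   - tpred    : transition predicates (over T(V u V_prev)), with
                satisfaction (val, val') |= t, i.e. val_prev u val' |= t
                (first argument = previous valuation). *)
Record theory (V : Type) := Theory {
  cst : Type;
  term : Type;
  spred : Type;
  tpred : Type;
  eval_term : term -> (V -> cst) -> cst;
  sat_s : spred -> (V -> cst) -> Prop;
  sat_t : tpred -> (V -> cst) -> (V -> cst) -> Prop
}.

Inductive gform (V : Type) (Th : theory V) (E C : Type) :=
| GE of E
| GC of C
| GS of spred Th
| GT of tpred Th
| GNot of gform Th E C
| GAnd of gform Th E C & gform Th E C
| GOr of gform Th E C & gform Th E C.

Section Defs.
Variables (V : finType) (Th : theory V) (E C X Ps Pt : finType).
(* E' = E + X (so E is included in E'); Pr = state predicates ps (indexed
   by Ps) together with transition predicates pt (indexed by Pt). *)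
Variables (ps : Ps -> spred Th) (pt : Pt -> tpred Th).

Definition Val := V -> cst Th.

(* (val, E u C) |= f.  A transition-predicate atom is not satisfied by a
   single valuation (V_prev is unassigned). *)
Fixpoint gsat (val : Val) (Ein : {set E}) (Cin : {set C})
    (f : gform Th E C) : Prop :=
  match f with
  | GE e => e \in Ein
  | GC c => c \in Cin
  | GS s => sat_s s val
  | GT _ => False
  | GNot g => ~ gsat val Ein Cin g
  | GAnd g h => gsat val Ein Cin g /\ gsat val Ein Cin h
  | GOr g h => gsat val Ein Cin g \/ gsat val Ein Cin h
  end.

(* Arena <V, val0, delta>; delta is the finite-domain partial function
   a_guard i |-> a_upd i, for i in the finite index type a_I. *)
Record arena := Arena {
  a_val0 : Val;
  a_I : finType;
  a_guard : a_I -> gform Th E C;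
  a_upd : a_I -> V -> term Th
}.

Definition apply_upd (U : V -> term Th) (val : Val) : Val :=
  fun v => eval_term (U v) val.

(* delta is a function (distinct keys) and for all val, E, C exactly one
   guard in dom(delta) holds. *)
Definition arena_wf (A : arena) : Prop :=
  injective (a_guard (a:=A)) /\
  forall val (Ein : {set E}) (Cin : {set C}),
    exists! i : a_I A, gsat val Ein Cin (a_guard i).

Definition dstep (A : arena) (val : Val) (Ein : {set E}) (Cin : {set C})
    (val' : Val) : Prop :=
  exists i : a_I A, gsat val Ein Cin (a_guard i) /\ val' = apply_upd (a_upd i) val.

Definition cword := nat -> Val * ({set E} * {set C}).

Definition inL (A : arena) (w : cword) : Prop :=
  (w 0).1 = a_val0 A /\
  forall i, dstep A (w i).1 (w i).2.1 (w i).2.2 (w i.+1).1.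

Record aletter := ALetter {
  l_E : {set (E + X)%type};
  l_C : {set C};
  l_S : {set Ps};
  l_T : {set Pt}
}.
Definition aword := nat -> aletter.

Definition restrictE (Es : {set (E + X)%type}) : {set E} :=
  [set e | inl e \in Es].

Definition sat_st (val : Val) (ST : {set Ps}) : Prop :=
  forall p, p \in ST <-> sat_s (ps p) val.
Definition sat_tr (val val' : Val) (TR : {set Pt}) : Prop :=
  forall q, q \in TR <-> sat_t (pt q) val val'.

Definition abstracts (a : aword) (w : cword) : Prop :=
  forall i, (w i).2 = (restrictE (l_E (a i)), l_C (a i)) /\
    match i with
    | 0 => sat_st (w 0).1 (l_S (a 0))
    | j.+1 => sat_st (w i).1 (l_S (a i)) /\ sat_tr (w j).1 (w i).1 (l_T (a i))
    end.

Definition concretisable (A : arena) (a : aword) : Prop :=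
  exists w, inL A w /\ abstracts a w.

Record moore := Moore {
  m_S : finType;
  m_s0 : m_S;
  m_trans : m_S -> {set C} -> m_S;
  m_out : m_S -> {set (E + X)%type} * {set Ps} * {set Pt}
}.

Fixpoint mstate (M : moore) (ins : nat -> {set C}) (n : nat) : m_S M :=
  match n with
  | 0 => m_s0 M
  | n'.+1 => m_trans (mstate M ins n') (ins n')
  end.

Definition mtrace (M : moore) (ins : nat -> {set C}) : aword :=
  fun i => let o := m_out (mstate M ins i) in
    ALetter o.1.1 (ins i) o.1.2 o.2.

Definition inLM (M : moore) (a : aword) : Prop :=
  exists ins, forall i, a i = mtrace M ins i.

(* R satisfies the defining closure conditions of preceq_A *)
Definition simulation (A : arena) (M : moore) (R : Val -> m_S M -> Prop) : Prop :=
  forall val s, R val s ->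
    sat_st val (m_out s).1.2 /\
    forall (Cin : {set C}) val',
      dstep A val (restrictE (m_out s).1.1) Cin val' ->
      sat_tr val val' (m_out (m_trans s Cin)).2 /\ R val' (m_trans s Cin).

(* the largest such relation: union of all relations satisfying them *)
Definition preceq (A : arena) (M : moore) (val : Val) (s : m_S M) : Prop :=
  exists R, simulation A R /\ R val s.

Definition concretisableM (A : arena) (M : moore) : Prop :=
  preceq A (a_val0 A) (m_s0 M).

End Defs.

From mathcomp Require Import all_boot.
From Stdlib Require Import ClassicalEpsilon.

Set Implicit Arguments.
Unset Strict Implicit.
Unset Printing Implicit Defensive.

(* Since the arena is deterministic and total, every input sequence of the
   counterstrategy determines a unique run of the arena, and the abstract
   trace is concretisable iff this run satisfies the predicates the machine
   outputs along the way.  If val0 simulates s0, the simulation is an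
   invariant of the run, so every trace is concretisable.  Conversely, relate
   val to s when some concretisation of some trace reaches val while the
   machine is in s.  This relation is a simulation: to take the C-step from s,
   follow a trace that agrees with the old one up to now and then reads C; by
   determinism its concretisation passes through val, and its next valuation
   is the successor delta(val, E u C). *)

Section Arena.

Variables (V : finType) (Th : theory V) (E C : finType) (A : arena Th E C).
Hypothesis HA : arena_wf A.

Lemma dstep_functional val Ein Cin val1 val2 :
  dstep A val Ein Cin val1 -> dstep A val Ein Cin val2 -> val1 = val2.
Proof.
case: HA => _ unique_guard [i1 [sat1 ->]] [i2 [sat2 ->]].
have [j [_ eq_j]] := unique_guard val Ein Cin.
by rewrite -(eq_j _ sat1) -(eq_j _ sat2).
Qed.

Lemma dstep_total val Ein Cin : exists val', dstep A val Ein Cin val'.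
Proof.
case: HA => _ unique_guard; have [j [sat_j _]] := unique_guard val Ein Cin.
by exists (apply_upd (a_upd j) val), j.
Qed.

Definition delta val Ein Cin : Val Th :=
  proj1_sig (constructive_indefinite_description _ (dstep_total val Ein Cin)).

Lemma dstep_delta val Ein Cin : dstep A val Ein Cin (delta val Ein Cin).
Proof. by rewrite /delta; case: constructive_indefinite_description. Qed.

Lemma inL_val_eq (w1 w2 : cword Th E C) n :
  inL A w1 -> inL A w2 -> (forall i, i < n -> (w1 i).2 = (w2 i).2) ->
  (w1 n).1 = (w2 n).1.
Proof.
move=> [w1_0 w1_step] [w2_0 w2_step].
elim: n => [|n IHn] eq_in; first by rewrite w1_0 w2_0.
have eq_n : (w1 n).1 = (w2 n).1 by apply: IHn => i lt_in; apply/eq_in/ltnW.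
have := w1_step n; rewrite eq_n (eq_in n (ltnSn n)) => step1.
exact: dstep_functional step1 (w2_step n).
Qed.

End Arena.

Section Concretisation.

Variables (V : finType) (Th : theory V) (E C X Ps Pt : finType).
Variables (ps : Ps -> spred Th) (pt : Pt -> tpred Th).
Variables (A : arena Th E C) (M : moore E C X Ps Pt).

Lemma eq_mstate ins ins' n :
  (forall i, i < n -> ins i = ins' i) -> mstate M ins n = mstate M ins' n.
Proof.
elim: n => [|n IHn] eq_ins //=.
by rewrite IHn ?eq_ins // => i lt_in; apply/eq_ins/ltnW.
Qed.

Lemma eq_concretisable (a b : aword E C X Ps Pt) :
  a =1 b -> concretisable ps pt A a -> concretisable ps pt A b.
Proof.
move=> eq_ab [w [w_inL abs_w]]; exists w; split=> // -[|j].
  by rewrite -eq_ab; apply: abs_w 0.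
by rewrite -!eq_ab; apply: abs_w j.+1.
Qed.

Lemma abstracts_mtrace_input ins (w : cword Th E C) i :
  abstracts ps pt (mtrace M ins) w ->
  (w i).2 = (restrictE (m_out (mstate M ins i)).1.1, ins i).
Proof. by move=> /(_ i) []. Qed.

Lemma abstracts_sat_st (a : aword E C X Ps Pt) (w : cword Th E C) n :
  abstracts ps pt a w -> sat_st ps (w n).1 (l_S (a n)).
Proof.
by case: n => [|n] abs_w; [have [] := abs_w 0 | have [_ []] := abs_w n.+1].
Qed.

Lemma abstracts_sat_tr (a : aword E C X Ps Pt) (w : cword Th E C) n :
  abstracts ps pt a w -> sat_tr pt (w n).1 (w n.+1).1 (l_T (a n.+1)).
Proof. by move=> /(_ n.+1) [_ []]. Qed.

Lemma preceq_simulation : simulation ps pt A (preceq ps pt A (M:=M)).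
Proof.
move=> val s [R [simR Rvs]]; have [sat_s sim_step] := simR _ _ Rvs.
by split=> // Cin val' /sim_step [sat_t R_next]; split=> //; exists R.
Qed.

Section Forward.

Hypothesis HA : arena_wf A.

Fixpoint run_val (ins : nat -> {set C}) (n : nat) : Val Th :=
  if n is n'.+1 then
    delta HA (run_val ins n') (restrictE (m_out (mstate M ins n')).1.1) (ins n')
  else a_val0 A.

Definition run_word ins : cword Th E C :=
  fun i => (run_val ins i, (restrictE (m_out (mstate M ins i)).1.1, ins i)).

Lemma run_word_inL ins : inL A (run_word ins).
Proof. by split=> // i; apply: dstep_delta. Qed.

Hypothesis concM : concretisableM ps pt A M.

Lemma preceq_run ins n : preceq ps pt A (run_val ins n) (mstate M ins n).
Proof.
elim: n => [|n IHn] //=.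
by have [_ /(_ (ins n) _ (dstep_delta _ _ _ _)) []] := preceq_simulation IHn.
Qed.

Lemma run_word_abstracts ins : abstracts ps pt (mtrace M ins) (run_word ins).
Proof.
have sim n := preceq_simulation (preceq_run ins n).
case=> [|n]; split=> //; first by have [] := sim 0.
split; first by have [] := sim n.+1.
by have [_ /(_ (ins n) _ (dstep_delta _ _ _ _)) []] := sim n.
Qed.

Lemma concretisable_mtrace ins : concretisable ps pt A (mtrace M ins).
Proof.
exists (run_word ins).
by split; [apply: run_word_inL | apply: run_word_abstracts].
Qed.

End Forward.

Definition concretely_reachable (val : Val Th) (s : m_S M) :=
  exists ins n w, [/\ s = mstate M ins n, inL A w,
    abstracts ps pt (mtrace M ins) w & (w n).1 = val].

Section Backward.

Hypothesis HA : arena_wf A.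
Hypothesis traces_concretisable :
  forall ins, concretisable ps pt A (mtrace M ins).

Lemma concretisations_agree ins ins' w w' n :
  (forall i, i < n -> ins i = ins' i) ->
  inL A w -> abstracts ps pt (mtrace M ins) w ->
  inL A w' -> abstracts ps pt (mtrace M ins') w' ->
  (w n).1 = (w' n).1.
Proof.
move=> eq_ins w_inL abs_w w'_inL abs_w'.
apply: (inL_val_eq HA w_inL w'_inL) => i lt_in.
have eq_ins_i j : j < i -> ins j = ins' j.
  by move=> lt_ji; apply/eq_ins/(ltn_trans lt_ji).
rewrite (abstracts_mtrace_input _ abs_w) (abstracts_mtrace_input _ abs_w').
by rewrite (eq_mstate eq_ins_i) eq_ins.
Qed.

Lemma reachable_initial : concretely_reachable (a_val0 A) (m_s0 M).
Proof.
have [w [w_inL abs_w]] := traces_concretisable (fun=> set0).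
by exists (fun=> set0), 0, w; split=> //; case: w_inL.
Qed.

Lemma reachable_simulation : simulation ps pt A concretely_reachable.
Proof.
move=> _ _ [ins [n [w [-> w_inL abs_w <-]]]].
split=> [|Cin val' step]; first exact: abstracts_sat_st abs_w.
pose ins' i := if i == n then Cin else ins i.
have eq_ins i : i < n -> ins i = ins' i by rewrite /ins' => /ltn_eqF ->.
have [w' [w'_inL abs_w']] := traces_concretisable ins'.
have eq_state : mstate M ins' n.+1 = m_trans (mstate M ins n) Cin.
  by rewrite /= -(eq_mstate eq_ins) /ins' eqxx.
have eq_val : (w n).1 = (w' n).1.
  exact: concretisations_agree eq_ins w_inL abs_w w'_inL abs_w'.
have eq_next : val' = (w' n.+1).1.
  apply: (dstep_functional HA step).
  have := proj2 w'_inL n.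
  rewrite (abstracts_mtrace_input _ abs_w') -eq_val -(eq_mstate eq_ins).
  by rewrite /ins' eqxx.
split; last by exists ins', n.+1, w'; split.
by rewrite eq_val eq_next -eq_state; apply: abstracts_sat_tr abs_w'.
Qed.

Lemma concretisableM_of_traces : concretisableM ps pt A M.
Proof.
exists concretely_reachable.
by split; [apply: reachable_simulation | apply: reachable_initial].
Qed.

End Backward.
End Concretisation.

Theorem mainTheorem3 (V : finType) (Th : theory V) (E C X Ps Pt : finType)
  (ps : Ps -> spred Th) (pt : Pt -> tpred Th)
  (ps_inj : injective ps) (pt_inj : injective pt)
  (A : arena Th E C) (HA : arena_wf A)
  (M : moore E C X Ps Pt) :
  concretisableM ps pt A M <->
  (forall a : aword E C X Ps Pt, inLM M a -> concretisable ps pt A a).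
Proof.
split=> [concM a [ins eq_a] | traces_concretisable].
  have eq_trace : mtrace M ins =1 a by move=> i; rewrite eq_a.
  exact: eq_concretisable eq_trace (concretisable_mtrace HA concM ins).
apply: concretisableM_of_traces HA _ => ins.
by apply: traces_concretisable; exists ins.
Qed.
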